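(* Let $p$ be a prime and let $(\mathbb{K},|\cdot|_{\mathbb{K}})$ be a valued field with $\mathbb{Q}_p\subseteq\mathbb{K}$ such that the inclusion $\mathbb{Q}_p\hookrightarrow\mathbb{K}$ is continuous. Let $f:\mathbb{Q}_p\to\mathbb{K}$ be continuous, $n\ge0$, and $N\in\mathbb{N}$. If $\Delta_{p^N}^{n+1}f(x)=0$ for all $x\in\mathbb{Q}_p$, then for each $a\in\mathbb{Q}_p$ there exist constants $a_0,\dots,a_n\in\mathbb{K}$ such that $f(x)=a_0+a_1x+\cdots+a_nx^n$ for all $x\in a+p^N\mathbb{Z}_p$.
   Context: $\mathbb{Q}_p$ is the field of $p$-adic numbers, $\mathbb{Z}_p=\{x\in\mathbb{Q}_p:|x|_p\le1\}$, and $a+p^N\mathbb{Z}_p=\{a+p^Nz:z\in\mathbb{Z}_p\}$. $\Delta_h^{m}f(x)=\sum_{k=0}^{m}\binom{m}{k}(-1)^{m-k}f(x+kh)$. *)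

From Stdlib Require Import Reals.
From HB Require Import structures.
From mathcomp Require Import all_boot all_order all_algebra.
Set Implicit Arguments. Unset Strict Implicit. Unset Printing Implicit Defensive.
Import Order.TTheory GRing.Theory Num.Theory.
Local Open Scope ring_scope.

(* The p-adic absolute value on Q:  |0|_p = 0,
   |q|_p = p^(v_p(denq q)) / p^(v_p(numq q)) = p^(-v_p(q)) for q <> 0. *)
Definition padic_abs (p : nat) (q : rat) : R :=
  if q == 0 then R0
  else Rdiv (pow (INR p) (logn p `|denq q|%N)) (pow (INR p) (logn p `|numq q|%N)).

Definition is_absolute_value (F : fieldType) (absF : F -> R) : Prop :=
  (forall x : F, Rle R0 (absF x)) /\
  (forall x : F, absF x = R0 <-> x = 0) /\
  (forall x y : F, absF (x * y) = Rmult (absF x) (absF y)) /\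
  (forall x y : F, Rle (absF (x + y)) (Rplus (absF x) (absF y))).

Definition abs_continuous (A B : zmodType) (absA : A -> R) (absB : B -> R)
    (g : A -> B) : Prop :=
  forall (x : A) (eps : R), Rlt R0 eps ->
    exists delta : R, Rlt R0 delta /\
      forall y : A, Rlt (absA (y - x)) delta -> Rlt (absB (g y - g x)) eps.

Definition abs_cauchy (A : zmodType) (absA : A -> R) (u : nat -> A) : Prop :=
  forall eps : R, Rlt R0 eps -> exists M : nat,
    forall m k : nat, (M <= m)%N -> (M <= k)%N -> Rlt (absA (u m - u k)) eps.

Definition abs_converges_to (A : zmodType) (absA : A -> R) (u : nat -> A) (l : A) : Prop :=
  forall eps : R, Rlt R0 eps -> exists M : nat,
    forall m : nat, (M <= m)%N -> Rlt (absA (u m - l)) eps.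

(* (F, absF) is (a model of) the field Q_p of p-adic numbers: a valued field
   which is the completion of (Q, |.|_p), i.e. Q embeds isometrically
   (via the canonical map ratr), F is complete, and Q is dense in F.
   This characterizes Q_p up to unique isometric isomorphism. *)
Definition is_Qp (p : nat) (F : fieldType) (absF : F -> R) : Prop :=
  is_absolute_value absF /\
  (forall q : rat, absF (ratr q) = padic_abs p q) /\
  (forall u : nat -> F, abs_cauchy absF u -> exists l : F, abs_converges_to absF u l) /\
  (forall (x : F) (eps : R), Rlt R0 eps -> exists q : rat, Rlt (absF (x - ratr q)) eps).

Definition fdiff (A : zmodType) (B : pzRingType) (h : A) (m : nat) (f : A -> B) (x : A) : B :=
  \sum_(k < m.+1) ('C(m, k))%:R * (-1) ^+ (m - k) * f (x + h *+ k).

From Stdlib Require Import Reals Lra Psatz.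
From HB Require Import structures.
From mathcomp Require Import all_boot all_order all_algebra ring.
Import Order.TTheory GRing.Theory Num.Theory.
Set Implicit Arguments. Unset Strict Implicit.
(* Stdlib's R_scope and MathComp's ring_scope both use the key %R; give them
   distinct keys so that real-number expressions can be written as (...)%R. *)
Delimit Scope ring_scope with ring.
Delimit Scope R_scope with R.
Local Open Scope ring_scope.

(* Let h = p^N.  If Delta_h^(n+1) f = 0, then for each a
   the sequence s k = f (a + k h) has vanishing (n+1)-th forward differences,
   so by Newton's forward formula s k = P0(k) for a polynomial P0 of degree
   <= n.  An affine change of variable turns this into
   f (a + k h) = P (iota (a + k h)) for every natural number k.  Both sides are
   continuous functions of x in Q_p, and the points a + k h (k in N) are dense
   in the ball a + p^N Z_p, because N is dense in Z_p; hence the identity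
   extends to the whole ball. *)

Section AbsoluteValue.
Variables (F : fieldType) (absF : F -> R).
Hypothesis HF : is_absolute_value absF.

Lemma abs_ge0 x : Rle R0 (absF x). Proof. by case: HF. Qed.
Lemma abs_eq0 x : absF x = R0 <-> x = 0. Proof. by case: HF => _ []. Qed.
Lemma absM x y : absF (x * y) = Rmult (absF x) (absF y).
Proof. by case: HF => _ [] _ []. Qed.
Lemma absD x y : Rle (absF (x + y)) (Rplus (absF x) (absF y)).
Proof. by case: HF => _ [] _ []. Qed.

Lemma abs0 : absF 0 = R0. Proof. exact/abs_eq0. Qed.

Lemma abs1 : absF 1 = R1.
Proof.
have h11 := absM 1 1; rewrite mulr1 in h11.
have h1 : absF 1 <> R0 by move/abs_eq0/eqP; rewrite oner_eq0.
have := abs_ge0 1; nra.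
Qed.

Lemma absN x : absF (- x) = absF x.
Proof.
have hN1 : absF (-1) = R1.
  have := absM (-1) (-1); rewrite mulrNN mulr1 abs1.
  have := abs_ge0 (-1); nra.
by rewrite -mulN1r absM hN1 Rmult_1_l.
Qed.

Lemma abs_subC x y : absF (x - y) = absF (y - x).
Proof. by rewrite -absN opprB. Qed.

Lemma abs_dist_triangle x y z : Rle (absF (x - z)) (Rplus (absF (x - y)) (absF (y - z))).
Proof.
have -> : x - z = (x - y) + (y - z) by rewrite addrA subrK.
exact: absD.
Qed.

End AbsoluteValue.

Definition cont_at (A B : zmodType) (absA : A -> R) (absB : B -> R)
    (g : A -> B) (x : A) : Prop :=
  forall eps : R, Rlt R0 eps -> exists delta : R, Rlt R0 delta /\
    forall y : A, Rlt (absA (y - x)) delta -> Rlt (absB (g y - g x)) eps.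

Lemma cont_comp (A B C : zmodType) (absA : A -> R) (absB : B -> R) (absC : C -> R)
    (g : A -> B) (k : B -> C) (x : A) :
  cont_at absA absB g x -> cont_at absB absC k (g x) ->
  cont_at absA absC (fun y => k (g y)) x.
Proof.
move=> cg ck e he.
have [d1 [hd1 Hk]] := ck e he.
have [d2 [hd2 Hg]] := cg d1 hd1.
by exists d2; split=> // y hy; apply/Hk/Hg.
Qed.

Section ContinuityRules.
Variables (A : zmodType) (absA : A -> R) (F : fieldType) (absF : F -> R).
Hypothesis HF : is_absolute_value absF.

Lemma cont_ext (g k : A -> F) x :
  (forall y, g y = k y) -> cont_at absA absF g x -> cont_at absA absF k x.
Proof.
move=> gk cg e he; have [d [hd Hg]] := cg e he.
by exists d; split=> // y hy; rewrite -!gk; apply: Hg.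
Qed.

Lemma cont_const (c : F) x : cont_at absA absF (fun=> c) x.
Proof.
move=> e he; exists R1; split; first lra.
by move=> y _; rewrite subrr (abs0 HF).
Qed.

Lemma cont_add (g k : A -> F) x : cont_at absA absF g x -> cont_at absA absF k x ->
  cont_at absA absF (fun y => g y + k y) x.
Proof.
move=> cg ck e he.
have he2 : Rlt R0 (e / 2)%R by lra.
have [d1 [hd1 Hg]] := cg _ he2; have [d2 [hd2 Hk]] := ck _ he2.
exists (Rmin d1 d2); split; first exact: Rmin_glb_lt.
move=> y hy.
have eg := Hg y (Rlt_le_trans _ _ _ hy (Rmin_l _ _)).
have ek := Hk y (Rlt_le_trans _ _ _ hy (Rmin_r _ _)).
rewrite opprD addrACA; apply: Rle_lt_trans (absD HF _ _) _.
(* [set] identifies the differences in the goal with those in [eg], [ek]: they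
   are convertible but carry different instance paths, which lra would treat
   as unrelated atoms. *)
set u := absF (g y - g x) in eg *; set v := absF (k y - k x) in ek *; lra.
Qed.

Lemma cont_mul (g k : A -> F) x : cont_at absA absF g x -> cont_at absA absF k x ->
  cont_at absA absF (fun y => g y * k y) x.
Proof.
move=> cg ck e he.
set a := absF (g x); set b := absF (k x).
have ha : Rle R0 a := abs_ge0 HF _; have hb : Rle R0 b := abs_ge0 HF _.
(* a tolerance e' <= 1 with e' * (a + b + 1) <= e *)
set e' := Rmin R1 (e / (a + b + 1))%R.
have he' : Rlt R0 e'.
  by apply: Rmin_glb_lt; [lra | apply: Rdiv_lt_0_compat; lra].
have he'1 : Rle e' R1 := Rmin_l _ _.
have he'e : Rle (e' * (a + b + 1))%R e.
  have : Rle e' (e / (a + b + 1))%R := Rmin_r _ _.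
  have : ((e / (a + b + 1)) * (a + b + 1))%R = e.
    by rewrite /Rdiv Rmult_assoc Rinv_l ?Rmult_1_r //; lra.
  clearbody e'; nra.
have [d1 [hd1 Hg]] := cg _ he'; have [d2 [hd2 Hk]] := ck _ he'.
exists (Rmin d1 d2); split; first exact: Rmin_glb_lt.
move=> y hy.
have eg := Hg y (Rlt_le_trans _ _ _ hy (Rmin_l _ _)).
have ek := Hk y (Rlt_le_trans _ _ _ hy (Rmin_r _ _)).
have hky : Rle (absF (k y)) (b + 1)%R.
  have -> : k y = (k y - k x) + k x by rewrite subrK.
  apply: Rle_trans (absD HF _ _) _; rewrite -/b.
  set w := absF (k y - k x) in ek *; lra.
have -> : g y * k y - g x * k x = (g y - g x) * k y + g x * (k y - k x) by ring.
apply: Rle_lt_trans (absD HF _ _) _; rewrite !(absM HF) -/a.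
have hu := abs_ge0 HF (g y - g x); have hw := abs_ge0 HF (k y - k x).
set u := absF (g y - g x) in eg hu *; set w := absF (k y - k x) in ek hw *.
set c := absF (k y) in hky *.
clearbody e' u w c; nra.
Qed.

Lemma cont_eq_dense (g k : A -> F) x :
  cont_at absA absF g x -> cont_at absA absF k x ->
  (forall d, Rlt R0 d -> exists y, Rlt (absA (y - x)) d /\ g y = k y) -> g x = k x.
Proof.
move=> cg ck dense; apply/eqP; rewrite -subr_eq0; apply/eqP/(abs_eq0 HF).
set v := absF (g x - k x).
case: (Rle_lt_or_eq_dec _ _ (abs_ge0 HF (g x - k x))) => [hv|] //; exfalso.
have hv2 : Rlt R0 (v / 2)%R by rewrite /v; lra.
have [d1 [hd1 Hg]] := cg _ hv2; have [d2 [hd2 Hk]] := ck _ hv2.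
have [y [hy gky]] := dense _ (Rmin_glb_lt _ _ _ hd1 hd2).
have eg := Hg y (Rlt_le_trans _ _ _ hy (Rmin_l _ _)).
have ek := Hk y (Rlt_le_trans _ _ _ hy (Rmin_r _ _)).
have ev : v = absF (- (g y - g x) + (k y - k x)).
  by rewrite /v gky opprB addrA subrK.
have := absD HF (- (g y - g x)) (k y - k x); rewrite -ev (absN HF).
set u := absF (g y - g x) in eg *; set w := absF (k y - k x) in ek *.
clearbody v u w; lra.
Qed.

End ContinuityRules.

Lemma cont_horner (F : fieldType) (absF : F -> R) (HF : is_absolute_value absF)
    (P : {poly F}) (x : F) : cont_at absF absF (horner P) x.
Proof.
elim/poly_ind: P => [|P c IH].
  by apply: (cont_ext (g := fun=> 0)) => [y|]; [rewrite horner0 | exact: cont_const].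
apply: (cont_ext (g := fun y => P.[y] * y + c)) => [y|]; first by rewrite hornerMXaddC.
by apply: cont_add => //; [apply: cont_mul => // e he; exists e | exact: cont_const].
Qed.

Section ForwardDifferences.
Variable K : comNzRingType.

Definition delta (s : nat -> K) : nat -> K := fun k => s k.+1 - s k.

Lemma iter_delta_sum m (s : nat -> K) k :
  iter m delta s k = \sum_(j < m.+1) ('C(m, j))%:R * (-1) ^+ (m - j) * s (k + j)%N.
Proof.
elim: m k => [|m IH] k.
  by rewrite big_ord_recl big_ord0 /= addr0 bin0 addn0 mul1r expr0 mul1r.
rewrite iterS /delta !IH [in RHS]big_ord_recl /= bin0 subn0 mul1r addn0.
under [in RHS]eq_bigr => j _ do rewrite /bump /= add1n binS subSS natrD !mulrDl addnS.
rewrite big_split /=.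
under eq_bigr => j _ do rewrite addSn.
set A := (\sum_(j < m.+1) _ * s (k + j).+1).
set B := (\sum_(j < m.+1) _ * s (k + j)%N).
set S := (\sum_(i < m.+1) 'C(m, i.+1)%:R * _ * _).
suff -> : - B = (-1) ^+ m.+1 * s k + S by rewrite [A + _]addrC -addrA.
rewrite /B /S big_ord_recl /= subn0 addn0 bin0 mul1r.
rewrite [in RHS]big_ord_recr /= bin_small // mulr0n !mul0r addr0.
rewrite opprD exprS mulN1r mulNr; congr (_ + _).
rewrite -sumrN; apply: eq_bigr => j _ /=.
rewrite /bump /= add1n addnS -[(m - j)%N](subnSK (ltn_ord j)) exprS.
by rewrite !mulN1r mulrN mulNr.
Qed.

(* Newton's forward formula: s k = sum_j C(k, j) (Delta^j s)(0), for any
   number M > k of terms (the terms with j > k vanish). *)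
Lemma newton_forward k M (s : nat -> K) : (k < M)%N ->
  s k = \sum_(j < M) ('C(k, j))%:R * iter j delta s 0%N.
Proof.
elim: k M s => [|k IH] [|M] s //= hk.
  rewrite big_ord_recl /= bin0 mul1r big1 ?addr0 // => j _.
  by rewrite bin0n /= mul0r.
have -> : s k.+1 = s k + delta s k by rewrite /delta addrC subrK.
rewrite (IH M.+1 s) ?(ltnW hk) // (IH M.+1 (delta s)) ?(ltnW hk) //.
rewrite [X in X + _]big_ord_recl [in RHS]big_ord_recl /= !bin0.
under [X in _ + X = _]eq_bigr => j _ do rewrite -iterSr.
rewrite [X in _ + X = _]big_ord_recr /= bin_small // mulr0n mul0r addr0.
rewrite -addrA -big_split /=; congr (_ + _); apply: eq_bigr => j _.
by rewrite /bump /= add1n binS natrD mulrDl addrC.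
Qed.

Lemma iter_delta_vanish m (s : nat -> K) :
  (forall k, iter m delta s k = 0) -> forall j k, (m <= j)%N -> iter j delta s k = 0.
Proof.
move=> Hm j k /subnKC <-; rewrite addnC iterD.
elim: (j - m)%N k => [|i IH] k //=.
by rewrite /delta !IH subrr.
Qed.

End ForwardDifferences.

Section BinomialInterpolation.
Variable K : fieldType.
Hypothesis charK : forall m, (0 < m)%N -> (m%:R : K) != 0.

Definition binom_poly j : {poly K} :=
  (j`!%:R)^-1 *: \prod_(0 <= i < j) ('X - (i%:R : K)%:P).

Lemma size_binom_poly j : (size (binom_poly j) <= j.+1)%N.
Proof.
apply: leq_trans (size_scale_leq _ _) _.
elim: j => [|j IH]; first by rewrite big_nil size_poly1.
rewrite big_nat_recr //=; apply: leq_trans (size_polyMleq _ _) _.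
by rewrite size_XsubC addn2.
Qed.

Lemma binom_poly_nat j k : (binom_poly j).[k%:R] = ('C(k, j))%:R.
Proof.
have falling : (\prod_(0 <= i < j) ('X - (i%:R : K)%:P)).[k%:R] = (k ^_ j)%:R.
  elim: j => [|j IH]; first by rewrite big_nil hornerC ffactn0.
  rewrite big_nat_recr //= hornerM IH hornerXsubC ffactnSr.
  case: (leqP j k) => hjk; first by rewrite natrM natrB.
  by rewrite ffact_small // mul0r.
rewrite hornerZ falling -bin_ffact natrM mulrC mulrK //.
by rewrite unitfE charK // fact_gt0.
Qed.

Lemma delta_vanish_poly (s : nat -> K) n :
  (forall k, iter n.+1 (@delta K) s k = 0) ->
  exists P : {poly K}, (size P <= n.+1)%N /\ forall k, s k = P.[k%:R].
Proof.
move=> Hs; exists (\sum_(j < n.+1) iter j (@delta K) s 0%N *: binom_poly j); split.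
  apply: (big_ind (fun P : {poly K} => size P <= n.+1)%N); first by rewrite size_poly0.
    by move=> P Q hP hQ; apply: leq_trans (size_polyD _ _) _; rewrite geq_max hP hQ.
  move=> j _; apply: leq_trans (size_scale_leq _ _) _.
  exact: leq_trans (size_binom_poly j) (ltn_ord j).
move=> k; rewrite (@newton_forward K k (n.+1 + k.+1)) ?ltn_addl // big_split_ord /=.
rewrite [X in _ + X]big1 ?addr0 => [|j _]; last first.
  by rewrite -iterS (iter_delta_vanish Hs) ?ltnS ?leq_addr // mulr0.
rewrite horner_sum; apply: eq_bigr => j _.
by rewrite hornerZ binom_poly_nat mulrC.
Qed.

End BinomialInterpolation.

Lemma progression_poly (F K : fieldType) (iota : {rmorphism F -> K})
    (charK : forall m, (0 < m)%N -> (m%:R : K) != 0)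
    (h : F) (f : F -> K) (n : nat) :
  h != 0 -> (forall x, fdiff h n.+1 f x = 0) ->
  forall a, exists P : {poly K}, (size P <= n.+1)%N /\
    forall k, f (a + h *+ k) = P.[iota (a + h *+ k)].
Proof.
move=> hh0 HD a.
pose s k := f (a + h *+ k).
have Hs : forall k, iter n.+1 (@delta K) s k = 0.
  move=> k; rewrite iter_delta_sum -[RHS](HD (a + h *+ k)) /fdiff.
  by apply: eq_bigr => j _; rewrite /s mulrnDr addrA.
have [P0 [hsz hP0]] := delta_vanish_poly charK Hs.
(* the affine change of variable k = (iota (a + h k) - iota a) / iota h *)
pose L := (iota h)^-1 *: ('X - (iota a)%:P).
have sizeL : size L = 2 by rewrite size_scale ?size_XsubC // invr_eq0 fmorph_eq0.
exists (P0 \Po L); split; first by rewrite size_comp_poly2.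
move=> k; rewrite -/(s k) hP0 horner_comp hornerZ hornerXsubC.
by rewrite rmorphD rmorphMn addrAC subrr add0r -[iota h *+ k]mulr_natr mulKf ?fmorph_eq0.
Qed.

Section PadicIntegers.
Variables (p : nat) (Qp : fieldType) (absQ : Qp -> R).
Hypotheses (Hp : prime p) (HQp : is_Qp p absQ).

Let HA : is_absolute_value absQ := proj1 HQp.

Lemma p_gt1 : Rlt R1 (INR p).
Proof. by apply: lt_1_INR; apply/ssrnat.ltP; exact: prime_gt1. Qed.

Lemma pow_p_gt0 M : Rlt R0 (pow (INR p) M).
Proof. by apply: pow_lt; have := p_gt1; lra. Qed.

Lemma absQ_int (w : int) :
  absQ w%:~R = if w == 0 then R0 else Rinv (pow (INR p) (logn p `|w|)).
Proof.
have [_ [Hrat _]] := HQp.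
rewrite -ratr_int Hrat /padic_abs numq_int denq_int intr_eq0.
by case: (w == 0) => //=; rewrite logn1 /= /Rdiv Rmult_1_l.
Qed.

Lemma absQ_int_dvd (w : int) M : (p ^ M %| `|w|)%N -> Rle (absQ w%:~R) (Rinv (pow (INR p) M)).
Proof.
rewrite absQ_int; case: eqP => [_ _|/eqP w0 hdvd].
  by apply/Rlt_le/Rinv_0_lt_compat/pow_p_gt0.
apply/Rinv_le_contravar/Rle_pow; first exact: pow_p_gt0.
  by have := p_gt1; lra.
by apply/ssrnat.leP; rewrite -pfactor_dvdn // absz_gt0.
Qed.

Lemma absQ_int_le1 (w : int) : Rle (absQ w%:~R) R1.
Proof. by have := @absQ_int_dvd w 0; rewrite dvd1n /= Rinv_1; apply. Qed.

Lemma absQ_int_unit (w : int) : coprime p `|w| -> absQ w%:~R = R1.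
Proof.
move=> cop; rewrite absQ_int logn_coprime //= Rinv_1.
case: eqP cop => // ->; rewrite /coprime gcdn0 => /eqP p1.
by move: (prime_gt1 Hp); rewrite p1.
Qed.

Lemma natQ_neq0 m : (0 < m)%N -> (m%:R : Qp) != 0.
Proof.
move=> m_gt0; apply/eqP => m0.
have := absQ_int m; rewrite -pmulrn m0 (abs0 HA) absz_nat.
case: eqP => [[m_eq0]|_]; first by rewrite m_eq0 in m_gt0.
by have := Rinv_0_lt_compat _ (pow_p_gt0 (logn p m)); lra.
Qed.

Lemma den_coprime q : Rlt (padic_abs p q) (INR p) -> coprime p `|denq q|.
Proof.
move=> small; rewrite prime_coprime //; apply/negP => p_den.
have q0 : q != 0.
  by apply: contraTneq p_den => ->; rewrite dvdn1 neq_ltn prime_gt1 ?orbT.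
have cop_num : coprime p `|numq q|.
  by rewrite coprime_sym (coprime_dvdr p_den) // coprime_num_den.
have den_ge1 : (1 <= logn p `|denq q|)%N.
  by rewrite -pfactor_dvdn ?expn1 // absz_gt0 denq_neq0.
move: small; rewrite /padic_abs (negbTE q0) (logn_coprime cop_num) /= /Rdiv Rinv_1 Rmult_1_r.
have := Rle_pow (INR p) 1 _ (Rlt_le _ _ p_gt1) (ssrnat.leP den_ge1).
by rewrite /= Rmult_1_r; lra.
Qed.

Lemma int_congr_sol (u : int) (d P : nat) : (0 < P)%N -> coprime d P ->
  exists k : nat, (P%:Z %| u - k%:Z * d%:Z)%Z.
Proof.
move=> P_gt0 cop.
have [x [y bez]] := Bezoutz d%:Z P%:Z.
have {}bez : x * d%:Z + y * P%:Z = 1 by rewrite bez /gcdz !absz_nat (eqP cop).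
have P0 : P%:Z != 0 by rewrite eqz_nat -lt0n.
exists `|((u * x) %% P%:Z)%Z|%N.
rewrite gez0_abs ?modz_ge0 //.
set q := ((u * x) %/ P)%Z.
have -> : ((u * x) %% P)%Z = u * x - q * P by rewrite {2}(divz_eq (u * x) P) addrAC subrr add0r.
apply/dvdzP; exists (u * y + q * d).
by rewrite -{1}(mulr1 u) -bez; ring.
Qed.

Lemma rat_near_nat q M : coprime p `|denq q| ->
  exists k : nat, Rle (absQ (ratr q - k%:R)) (Rinv (pow (INR p) M)).
Proof.
move=> cop; set dn := `|denq q|%N.
have dn_gt0 : (0 < dn)%N by rewrite absz_gt0 denq_neq0.
have denqE : denq q = dn%:Z by rewrite /dn gez0_abs // ltW // denq_gt0.
have pM_gt0 : (0 < p ^ M)%N by rewrite expn_gt0 prime_gt0.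
have cop_dn : coprime dn (p ^ M) by rewrite coprimeXr // coprime_sym.
have [k dvd] := int_congr_sol (numq q) pM_gt0 cop_dn.
exists k.
have dn0 : (dn%:R : Qp) != 0 := natQ_neq0 dn_gt0.
have ratrE : ratr q = (numq q)%:~R / dn%:R :> Qp by rewrite /ratr denqE -pmulrn.
have scaled : (ratr q - k%:R) * dn%:R = (numq q - k%:Z * dn%:Z)%:~R :> Qp.
  by rewrite ratrE intrB intrM -!pmulrn mulrBl divfK.
have := congr1 absQ scaled; rewrite (absM HA) pmulrn (@absQ_int_unit dn) ?absz_nat // => e.
by have := absQ_int_dvd dvd; rewrite -e; lra.
Qed.

Lemma inv_pow_p_small d : Rlt R0 d -> exists M, Rlt (Rinv (pow (INR p) M)) d.
Proof.
move=> hd; have p_abs : Rgt (Rabs (INR p)) R1 by rewrite Rabs_right; have := p_gt1; lra.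
have [M big] := Pow_x_infinity _ p_abs (2 * Rinv d)%R; exists M.
have := big M (le_n M); have := pow_p_gt0 M; rewrite Rabs_right; last first.
  by apply/Rle_ge/Rlt_le/pow_p_gt0.
set x := pow (INR p) M => x_gt0 x_big.
have := Rinv_r x (ltac:(lra)); have := Rinv_r d (ltac:(lra)).
have := Rinv_0_lt_compat _ x_gt0; have := Rinv_0_lt_compat _ hd.
nra.
Qed.

Lemma nat_dense z : Rle (absQ z) R1 ->
  forall d, Rlt R0 d -> exists k : nat, Rlt (absQ (k%:R - z)) d.
Proof.
move=> hz d hd; have [_ [Hrat [_ Qdense]]] := HQp.
have [M hM] := inv_pow_p_small (ltac:(lra) : Rlt R0 (d / 2)%R).
have [q hq] := Qdense z (Rmin (1 / 2) (d / 2))%R (ltac:(apply: Rmin_glb_lt; lra)).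
rewrite (abs_subC HA) in hq.
have hq1 := Rlt_le_trans _ _ _ hq (Rmin_l _ _).
have hq2 := Rlt_le_trans _ _ _ hq (Rmin_r _ _).
have small : Rlt (padic_abs p q) (INR p).
  rewrite -Hrat; have := absD HA (ratr q - z) z; rewrite subrK.
  have : Rle 2%R (INR p) by apply: (le_INR 2); apply/ssrnat.leP/prime_gt1.
  by set r := absQ (ratr q - z) in hq1 *; lra.
have [k hk] := rat_near_nat M (den_coprime small).
exists k; have := abs_dist_triangle HA k%:R (ratr q) z.
rewrite (abs_subC HA k%:R (ratr q)).
set u := absQ (ratr q - k%:R) in hk *; set w := absQ (ratr q - z) in hq2 *.
set eps := Rinv (pow (INR p) M) in hM hk.
by set t := absQ (k%:R - z); lra.
Qed.

Lemma progression_dense N a z : Rle (absQ z) R1 -> forall d, Rlt R0 d ->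
  exists k : nat,
    Rlt (absQ (a + (p%:R : Qp) ^+ N *+ k - (a + (p%:R : Qp) ^+ N * z))) d.
Proof.
move=> hz d hd; have [k hk] := nat_dense hz hd; exists k.
rewrite opprD addrACA subrr add0r -mulr_natr -mulrBr (absM HA).
have : Rle (absQ ((p%:R : Qp) ^+ N)) R1 by rewrite -natrX pmulrn; apply: absQ_int_le1.
have := abs_ge0 HA (k%:R - z); set t := absQ (k%:R - z) in hk *.
by set s := absQ ((p%:R : Qp) ^+ N); nra.
Qed.

End PadicIntegers.

Theorem corollary7 (p : nat) (Hp : prime p)
    (Qp : fieldType) (absQ : Qp -> R) (HQp : is_Qp p absQ)
    (K : fieldType) (absK : K -> R) (HK : is_absolute_value absK)
    (iota : {rmorphism Qp -> K}) (Hiota : abs_continuous absQ absK iota)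
    (f : Qp -> K) (Hf : abs_continuous absQ absK f) (n N : nat)
    (HD : forall x : Qp, fdiff ((p%:R : Qp) ^+ N) n.+1 f x = 0) :
  forall a : Qp, exists c : 'I_n.+1 -> K,
    forall z : Qp, Rle (absQ z) R1 ->
      f (a + (p%:R : Qp) ^+ N * z) = \sum_(i < n.+1) c i * (iota (a + (p%:R : Qp) ^+ N * z)) ^+ i.
Proof.
move=> a; set h := (p%:R : Qp) ^+ N.
have charK : forall m, (0 < m)%N -> (m%:R : K) != 0.
  by move=> m m_gt0; rewrite -(rmorph_nat iota) fmorph_eq0 (natQ_neq0 Hp HQp).
have h0 : h != 0 by rewrite expf_neq0 // (natQ_neq0 Hp HQp) ?prime_gt0.
have [P [sizeP HP]] := progression_poly iota charK h0 HD a.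
exists (fun i => P`_i) => z hz; rewrite -horner_coef_wide //.
apply: (cont_eq_dense HK (g := f) (k := fun x => P.[iota x])).
- exact: Hf.
- exact: cont_comp (Hiota _) (cont_horner HK P _).
- move=> d hd; have [k hk] := progression_dense Hp HQp N a hz hd.
  by exists (a + h *+ k); split; last exact: HP.
Qed.
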